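(* Let $\Delta\in\mathfrak{t}_{\mathrm{loc}}$ and $A\in\mathbb{C}^{2^n\times 2^n}$ satisfy $[\Delta,A]=i\varphi A$ for some $\varphi\in\mathbb{Q}$. Then there exists a rational $\Delta'\in\mathfrak{t}_{\mathrm{loc}}$, i.e. $\Delta'=i\cdot\mathrm{diag}(\mu_1,\dots,\mu_{2^n})$ with all $\mu_k\in\mathbb{Q}$, such that $[\Delta',A]=i\varphi A$.
   Context: $\mathfrak{t}_{\mathrm{loc}}$ is the set of diagonal matrices in the Lie algebra of $SU(2)\otimes\cdots\otimes SU(2)$ ($n$ factors), i.e. all matrices $\sum_{j=1}^n I_2\otimes\cdots\otimes I_2\otimes\mathrm{diag}(i\lambda_j,-i\lambda_j)\otimes I_2\otimes\cdots\otimes I_2$ (the diagonal factor in the $j$-th position) with $\lambda_j\in\mathbb{R}$. $[X,Y]=XY-YX$. *)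

From HB Require Import structures.
From mathcomp Require Import all_boot all_order all_algebra.
From mathcomp Require Import reals.
From mathcomp Require Import complex.
Set Implicit Arguments. Unset Strict Implicit. Unset Printing Implicit Defensive.
Import Order.TTheory GRing.Theory Num.Theory ComplexField.
Local Open Scope ring_scope.
Local Open Scope complex_scope.

(* Bit j (counting from the LEFT, i.e. tensor position j, 0-based) of the
   basis index k of (C^2)^{\otimes n}: the j-th tensor factor is the
   (n-1-j)-th binary digit of k (first factor = most significant bit). *)
Definition tbit (n : nat) (j : 'I_n) (k : nat) : bool :=
  odd (k %/ 2 ^ (n.-1 - j)).

(* Diagonal coefficient mu_k (real) of the element of t_loc with
   parameters lam : sum_j I (x) .. (x) diag(i lam_j, -i lam_j) (x) .. (x) I
   equals  i * mu_k  at position k. *)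
Definition tloc_coef (R : rcfType) (n : nat) (lam : 'I_n -> R) (k : 'I_(2 ^ n)) : R :=
  \sum_(j < n) (if tbit j k then - lam j else lam j).

Definition tloc (R : rcfType) (n : nat) (lam : 'I_n -> R) : 'M[complex R]_(2 ^ n) :=
  \matrix_(k, l) (if k == l then 'i * (tloc_coef lam k)%:C else 0).

Definition commutator (C : pzRingType) (m : nat) (X Y : 'M[C]_m) : 'M[C]_m :=
  X *m Y - Y *m X.

From HB Require Import structures.
From mathcomp Require Import all_boot all_order all_algebra.
From mathcomp Require Import reals.
From mathcomp Require Import complex.
Import Order.TTheory GRing.Theory Num.Theory ComplexField.
Local Open Scope ring_scope.
Local Open Scope complex_scope.

(* The condition [[Delta, A] = i phi A] says that [mu_k - mu_l = phi] on the
   support of [A], a linear system in the parameters [lam] whose coefficients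
   [(-1)^(bit) - (-1)^(bit)] are integers.  A linear system with coefficients in
   a subfield that is solvable over the big field is already solvable over the
   subfield, since the rank of a matrix does not change under field extension. *)

Lemma map_mx_solvable (F K : fieldType) (f : {rmorphism F -> K}) m p
    (M : 'M[F]_(m, p)) (b : 'rV[F]_p) (x : 'rV[K]_m) :
  x *m map_mx f M = map_mx f b -> exists y : 'rV[F]_m, y *m M = b.
Proof.
move=> xM; have /submxP[y ->] : (b <= M)%MS.
  by rewrite -(map_submx f); apply/submxP; exists x.
by exists y.
Qed.

Lemma linear_system_descent (F K : fieldType) (f : {rmorphism F -> K})
    (I : finType) n (a : I -> 'I_n -> F) (c : I -> F) (x : 'I_n -> K) :
  (forall i, \sum_j f (a i j) * x j = f (c i)) ->
  exists y : 'I_n -> F, forall i, \sum_j a i j * y j = c i.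
Proof.
move=> hx.
pose M : 'M[F]_(n, #|I|) := \matrix_(j, i) a (enum_val i) j.
pose b : 'rV[F]_#|I| := \row_i c (enum_val i).
have [|y yM] := @map_mx_solvable _ _ f _ _ M b (\row_j x j).
  apply/rowP => i; rewrite !mxE -hx; apply: eq_bigr => j _.
  by rewrite !mxE mulrC.
exists (fun j => y 0 j) => i; have /rowP/(_ (enum_rank i)) := yM.
rewrite !mxE enum_rankK => <-; apply: eq_bigr => j _.
by rewrite !mxE enum_rankK mulrC.
Qed.

Lemma commutator_diag_mx (C : comPzRingType) m (d : 'rV[C]_m) (A : 'M[C]_m) :
  commutator (diag_mx d) A = \matrix_(k, l) ((d 0 k - d 0 l) * A k l).
Proof.
apply/matrixP => k l.
by rewrite /commutator mul_diag_mx mul_mx_diag !mxE mulrBl [A k l * _]mulrC.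
Qed.

Lemma tlocE (R : rcfType) n (lam : 'I_n -> R) :
  tloc lam = diag_mx (\row_k ('i * (tloc_coef lam k)%:C)).
Proof. by apply/matrixP => k l; rewrite !mxE eq_sym; case: eqP. Qed.

Lemma commutator_tlocP (R : rcfType) n (lam : 'I_n -> R)
    (A : 'M[complex R]_(2 ^ n)) (r : R) :
  commutator (tloc lam) A = ('i * r%:C) *: A <->
  (forall k l, A k l != 0 -> tloc_coef lam k - tloc_coef lam l = r).
Proof.
have i_neq0 : 'i != 0 :> complex R by rewrite eq_complex /= oner_eq0 andbF.
rewrite tlocE commutator_diag_mx; split => [/matrixP hA k l Akl | hA].
- have := hA k l; rewrite !mxE -mulrBr -rmorphB.
  by move/(mulIf Akl)/(mulfI i_neq0)/complexI.
- apply/matrixP => k l; rewrite !mxE -mulrBr -rmorphB.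
  by have [->|/hA ->] := eqVneq (A k l) 0; rewrite ?mulr0.
Qed.

Lemma tloc_coefE (R : rcfType) n (lam : 'I_n -> R) k :
  tloc_coef lam k = \sum_j (-1) ^+ tbit j k * lam j.
Proof. by apply: eq_bigr => j _; rewrite mulr_sign. Qed.

Lemma tloc_coef_ratr (R : rcfType) n (y : 'I_n -> rat) k :
  tloc_coef (fun j => ratr (y j) : R) k = ratr (\sum_j (-1) ^+ tbit j k * y j).
Proof.
rewrite tloc_coefE rmorph_sum; apply: eq_bigr => j _.
by rewrite rmorphM rmorph_sign.
Qed.

Theorem lemma3p6 (R : realType) (n : nat) (lam : 'I_n -> R)
    (A : 'M[complex R]_(2 ^ n)) (phi : rat) :
  commutator (tloc lam) A = ('i * ratr phi) *: A ->
  exists lam' : 'I_n -> R,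
    (forall k : 'I_(2 ^ n), exists q : rat, tloc_coef lam' k = ratr q) /\
    commutator (tloc lam') A = ('i * ratr phi) *: A.
Proof.
rewrite -(fmorph_rat (real_complex R)) => /commutator_tlocP hA.
pose I := {kl : 'I_(2 ^ n) * 'I_(2 ^ n) | A kl.1 kl.2 != 0}.
pose a (i : I) (j : 'I_n) : rat :=
  (-1) ^+ tbit j (val i).1 - (-1) ^+ tbit j (val i).2.
have sum_aE (V : numFieldType) (i : I) (z : 'I_n -> V) :
    \sum_j ratr (a i j) * z j =
    \sum_j (-1) ^+ tbit j (val i).1 * z j - \sum_j (-1) ^+ tbit j (val i).2 * z j.
  by rewrite -sumrB; apply: eq_bigr => j _; rewrite rmorphB !rmorph_sign mulrBl.
have [y hy] : exists y : 'I_n -> rat, forall i, \sum_j a i j * y j = phi.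
  apply: (@linear_system_descent _ _ ratr _ _ _ _ lam) => -[[k l] /= Akl].
  by rewrite sum_aE -!tloc_coefE; exact: hA.
exists (fun j => ratr (y j)); split => [k|]; first by eexists; apply: tloc_coef_ratr.
apply/commutator_tlocP => k l Akl.
rewrite -(hy (exist _ (k, l) Akl)) rmorph_sum /=.
by under eq_bigr do rewrite rmorphM; rewrite sum_aE !tloc_coefE.
Qed.
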